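(* Let $q\ge2$ be a prime power, $d\ge6$ and $2\le j\le d$. Then $|Q_j(d-2)|>|Q_j(d-1)|$. Moreover, for $i\in\{d-2,d-1\}$, $Q_j(i)$ has the same sign as $T_{h_{\max}}(i,j)$, where $h_{\max}=\min\{j,d-i\}$.
   Context: Let $b=-q$. For integers $m\ge0$ and $l$, ${m\brack l}_b=\prod_{t=1}^{l}\frac{b^{m-t+1}-1}{b^t-1}$ for $l\ge0$ and $0$ for $l<0$. For $0\le i,j\le d$, $$Q_j(i)=\sum_{h=0}^{\min\{j,d-i\}}(-1)^j(-q)^{\binom{j-h}{2}+hd}{d-h\brack d-j}_b{d-i\brack h}_b,$$ the eigenvalues of the Hermitian forms graph $Q_q(d,j)$. $T_h(i,j)$ denotes the $h$-th summand (including the factor $(-1)^j$). *)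

From mathcomp Require Import all_boot all_order all_algebra.
Set Implicit Arguments. Unset Strict Implicit. Unset Printing Implicit Defensive.
Import Order.TTheory GRing.Theory Num.Theory.
Local Open Scope ring_scope.

Definition prime_power (q : nat) : Prop :=
  exists p k : nat, prime p /\ (0 < k)%N /\ q = (p ^ k)%N.

(* Gaussian binomial [m brack l]_b = prod_{t=1}^{l} (b^(m-t+1)-1)/(b^t-1),
   written with t' = t-1 ranging over 0..l-1.  Only nonnegative l occurs. *)
Definition gbin (b : rat) (m l : nat) : rat :=
  \prod_(t < l) ((b ^+ (m - t) - 1) / (b ^+ t.+1 - 1)).

Definition Tsum (q d i j h : nat) : rat :=
  let b : rat := - (q%:R) in
  (-1) ^+ j * b ^+ ('C(j - h, 2) + h * d) * gbin b (d - h) (d - j)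
    * gbin b (d - i) h.

Definition Qeig (q d i j : nat) : rat :=
  \sum_(h < (minn j (d - i)).+1) Tsum q d i j h.

From mathcomp Require Import all_boot all_order all_algebra.
From mathcomp Require Import ring lra zify.
Import Order.TTheory GRing.Theory Num.Theory.
Set Implicit Arguments. Unset Strict Implicit. Unset Printing Implicit Defensive.
Local Open Scope ring_scope.

(* Write T_0, T_1 for the summands of Q_j(d-1) = T_0 + T_1.  The summand h = 0
   does not depend on i, and the Gaussian binomials [2,1]_b = b + 1, [1,1]_b = 1
   give Q_j(d-2) = T_0 + (1 - q) T_1 + T_2.  Everything then follows from the
   two estimates |T_0| < |T_1| and 2|T_0| + q|T_1| < |T_2| by the triangle
   inequality ([dominant_terms]).  To prove the estimates, the upper-index
   recursion of Gaussian binomials ([gbin_shift]) expresses T_0, T_1, T_2 as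
   explicit multiples of one normalizer N; taking absolute values reduces the
   estimates to polynomial inequalities in q, q^(j-1), q^(d-1), one for each
   parity of j - 1 ([ratio_estimate]). *)

Lemma sgr_add_dom (R : realDomainType) (a b : R) :
  `|a| < `|b| -> Num.sg (a + b) = Num.sg b.
Proof.
have la := ler_norm a; have lna := ler_norm (- a); rewrite normrN in lna.
have [b_lt0|b_gt0|->] := ltgtP b 0.
- by rewrite (ltr0_norm b_lt0) => ?; rewrite !ltr0_sg //; lra.
- by rewrite (gtr0_norm b_gt0) => ?; rewrite !gtr0_sg //; lra.
- by rewrite normr0 => ?; have := normr_ge0 a; lra.
Qed.

(* How the two estimates yield the theorem, stated for abstract reals: with
   a0, a1, a2 playing the roles of T_0, T_1(d-1), T_2(d-2) and y = q, the sums
   a0 + a1 = Q_j(d-1) and a0 + (1 - y) a1 + a2 = Q_j(d-2) compare as claimed and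
   carry the signs of their last summands. *)
Lemma dominant_terms (R : realDomainType) (y a0 a1 a2 : R) :
  2 <= y -> `|a0| < `|a1| -> 2 * `|a0| + y * `|a1| < `|a2| ->
  [/\ `|a0 + a1| < `|a0 + (1 - y) * a1 + a2|,
      Num.sg (a0 + a1) = Num.sg a1 &
      Num.sg (a0 + (1 - y) * a1 + a2) = Num.sg a2].
Proof.
move=> y_ge2 lt01 lt2; have n0 := normr_ge0 a0; have n1 := normr_ge0 a1.
have mid : `|a0 + (1 - y) * a1| <= `|a0| + (y - 1) * `|a1|.
  by rewrite (le_trans (ler_normD _ _)) // normrM ler0_norm ?opprB //; lra.
have low : `|a2| - `|a0 + (1 - y) * a1| <= `|a0 + (1 - y) * a1 + a2|.
  by rewrite [X in _ <= `|X|]addrC lerB_normD.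
split; first by have := ler_normD a0 a1; lra.
  by rewrite sgr_add_dom.
by rewrite sgr_add_dom //; lra.
Qed.

Lemma quartic_ge1 (R : realFieldType) (y : R) :
  2 <= y -> 1 <= 2 * y ^+ 4 - 2 * y ^+ 3 - 2 * y ^+ 2 - 2 * y - 3.
Proof.
move=> y_ge2; have [t t_ge0 ->] : exists2 t, 0 <= t & y = t + 2 by exists (y - 2); lra.
have := exprn_ge0 2 t_ge0; have := exprn_ge0 3 t_ge0; have := exprn_ge0 4 t_ge0.
nra.
Qed.

Lemma quartic_mul_ge (R : realFieldType) (y : R) : 2 <= y ->
  2 * (y ^+ 3 + 2 * y + 3) + 1
    <= (2 * y ^+ 4 - 2 * y ^+ 3 - 2 * y ^+ 2 - 2 * y - 3) * y ^+ 5.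
Proof.
move=> y_ge2; have [t t_ge0 ->] : exists2 t, 0 <= t & y = t + 2 by exists (y - 2); lra.
have := exprn_ge0 2 t_ge0; have := exprn_ge0 3 t_ge0; have := exprn_ge0 4 t_ge0.
have := exprn_ge0 5 t_ge0; have := exprn_ge0 6 t_ge0; have := exprn_ge0 7 t_ge0.
have := exprn_ge0 8 t_ge0; have := exprn_ge0 9 t_ge0.
nra.
Qed.

(* Since d - 1 >= 5, the quantity u = q^(d-1) is at least 32. *)
Lemma expr5_ge32 (R : realFieldType) (y : R) : 2 <= y -> 32 <= y ^+ 5.
Proof. by move=> y_ge2; rewrite (_ : 32 = 2 ^+ 5) ?lerXn2r ?nnegrE //; lra. Qed.

(* The sharp polynomial inequality behind [ratio_estimate] when j - 1 is even
   (then z = q^(j-1) = v >= q^2).  The difference of the two sides is a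
   quadratic in u whose coefficients are controlled by y^2 <= v and y^5 <= u.
   It is nearly sharp: for y = 2, v = 4, u = 32 the sides are 220704 and
   221184, which is why no cruder bound suffices. *)
Lemma even_case_ineq (R : realFieldType) (y u v : R) :
  2 <= y -> y ^+ 2 <= v -> y ^+ 5 <= u ->
  2 * v ^+ 2 * (y * u + 1) * (u + 1) + y ^+ 2 * v * u * (u + 1) * (y * v + 1)
    < y ^+ 3 * u ^+ 2 * (y * v + 1) * (v - 1).
Proof.
move=> y_ge2 v_ge u_ge.
have K_ge1 := quartic_ge1 y_ge2; have K_mul := quartic_mul_ge y_ge2.
set K := 2 * y ^+ 4 - 2 * y ^+ 3 - 2 * y ^+ 2 - 2 * y - 3 in K_ge1 K_mul.
set c := y ^+ 3 + 2 * y + 3 in K_mul.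
have y2_ge : 4 <= y ^+ 2 by nra.
have y3_ge : 8 <= y ^+ 3 by nra.
have u_ge32 : 32 <= u by have := expr5_ge32 y_ge2; lra.
have Ku_ge : 2 * c + 1 <= K * u by apply: (le_trans K_mul); rewrite ler_pM2l; lra.
have quad_pos : 0 < K * u ^+ 2 - 2 * c * u - 4 by nra.
have v2_ge : y ^+ 2 * v <= v ^+ 2 by nra.
have v4_ge : 2 * y ^+ 3 <= v ^+ 2.
  suff : y ^+ 4 <= v ^+ 2 by nra.
  rewrite (_ : y ^+ 4 = (y ^+ 2) ^+ 2); last by rewrite -exprM.
  by rewrite ler_pXn2r // nnegrE; nra.
have v_mix : v * (y ^+ 4 - y ^+ 3 + y ^+ 2) <= v ^+ 2 * (y ^+ 2 - y + 1).
  have : 0 <= (v - y ^+ 2) * (v * (y ^+ 2 - y + 1)) by apply: mulr_ge0; nra.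
  have -> : y ^+ 4 - y ^+ 3 + y ^+ 2 = y ^+ 2 * (y ^+ 2 - y + 1) by ring.
  nra.
have I1 : 0 <= (v ^+ 2 * (y ^+ 2 - y + 1) - v * (y ^+ 4 - y ^+ 3 + y ^+ 2)) * u ^+ 2.
  by apply: mulr_ge0; nra.
have I2 : 0 <= (v ^+ 2 - 2 * y ^+ 3) * u ^+ 2 by apply: mulr_ge0; nra.
have I3 : 0 <= (v ^+ 2 - y ^+ 2 * v) * u by apply: mulr_ge0; lra.
have I4 : 0 < v ^+ 2 * (K * u ^+ 2 - 2 * c * u - 4) by apply: mulr_gt0 => //; nra.
rewrite -subr_gt0.
have -> : y ^+ 3 * u ^+ 2 * (y * v + 1) * (v - 1)
    - (2 * v ^+ 2 * (y * u + 1) * (u + 1) + y ^+ 2 * v * u * (u + 1) * (y * v + 1))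
  = (v ^+ 2 * (y ^+ 4 - y ^+ 3 - 2 * y) - v * (y ^+ 4 - y ^+ 3 + y ^+ 2) - y ^+ 3) * u ^+ 2
    - ((y ^+ 3 + 2 * y + 2) * v ^+ 2 + y ^+ 2 * v) * u - 2 * v ^+ 2 by ring.
rewrite /K /c in I4; nra.
Qed.

(* The analogue of [even_case_ineq] when j - 1 is odd (then z = -v). *)
Lemma odd_case_ineq (R : realFieldType) (y u v : R) :
  2 <= y -> y <= v -> y ^+ 5 <= u ->
  2 * v ^+ 2 * (y * u + 1) * (u + 1) + y ^+ 2 * v * u * (u + 1) * (y * v - 1)
    < y ^+ 3 * u ^+ 2 * (v + 1) * (y * v - 1).
Proof.
move=> y_ge2 v_ge u_ge.
have y2_ge : 4 <= y ^+ 2 by nra.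
have y3_ge : 8 <= y ^+ 3 by nra.
have u_ge3 : y ^+ 3 <= u.
  by apply: le_trans u_ge; rewrite (_ : y ^+ 5 = y ^+ 3 * y ^+ 2); [nra | ring].
have al_ge : 4 <= y ^+ 4 - y ^+ 3 - 2 * y.
  have [t t_ge0 ->] : exists2 t, 0 <= t & y = t + 2 by exists (y - 2); lra.
  have := exprn_ge0 2 t_ge0; have := exprn_ge0 3 t_ge0; have := exprn_ge0 4 t_ge0.
  nra.
set al := y ^+ 4 - y ^+ 3 - 2 * y in al_ge.
have al_u : y ^+ 3 + 2 * y + 3 <= al * u by nra.
have quad_pos : 0 < al * u ^+ 2 - (y ^+ 3 + 2 * y + 2) * u - 2 by nra.
have P1 : 0 < v ^+ 2 * (al * u ^+ 2 - (y ^+ 3 + 2 * y + 2) * u - 2).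
  by apply: mulr_gt0; nra.
have P2 : 0 <= ((y ^+ 4 - y ^+ 3 + y ^+ 2) * v - y ^+ 3) * u ^+ 2.
  apply: mulr_ge0; last exact: sqr_ge0.
  have : y ^+ 3 <= y ^+ 4 - y ^+ 3 + y ^+ 2 by rewrite (_ : y ^+ 4 = y * y ^+ 3); [nra | ring].
  nra.
have P3 : 0 <= y ^+ 2 * v * u by apply: mulr_ge0; nra.
rewrite -subr_gt0.
have -> : y ^+ 3 * u ^+ 2 * (v + 1) * (y * v - 1)
    - (2 * v ^+ 2 * (y * u + 1) * (u + 1) + y ^+ 2 * v * u * (u + 1) * (y * v - 1))
  = v ^+ 2 * (al * u ^+ 2 - (y ^+ 3 + 2 * y + 2) * u - 2)
    + ((y ^+ 4 - y ^+ 3 + y ^+ 2) * v - y ^+ 3) * u ^+ 2 + y ^+ 2 * v * u.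
  by rewrite /al; ring.
lra.
Qed.

(* With v = |z|, u = |w|,
   P = |z - 1|, Q = |xz - 1|, W1 = |w - 1|, W2 = |xw - 1| and a positive scale n,
   quantities A0, A1 satisfying the two relations below (the absolute values of
   the identities [Tsum1_identity] and [Tsum0_identity]) obey A0 < A1 and
   2 A0 + y A1 < n y^2 u^2.  The two shapes of (P, Q) come from the parity of
   the exponent of z = (-y)^(j-1), see [oppX_dist1]. *)
Lemma ratio_estimate (R : realFieldType) (y u v P Q W1 W2 n A0 A1 : R) :
  2 <= y -> y ^+ 5 <= u -> y <= v -> v <= u -> 0 < n ->
  (P = v - 1 /\ Q = y * v + 1 /\ y ^+ 2 <= v) \/ (P = v + 1 /\ Q = y * v - 1) ->
  u - 1 <= W1 -> W1 <= u + 1 -> 0 <= W2 -> W2 <= y * u + 1 -> 0 <= A0 ->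
  A1 * P = n * (v * u * W1) -> A0 * y * P * Q = n * (v ^+ 2 * W1 * W2) ->
  A0 < A1 /\ 2 * A0 + y * A1 < n * (y ^+ 2 * u ^+ 2).
Proof.
move=> y_ge2 u_ge v_ge v_le n_gt0 PQ W1_ge W1_le W2_ge0 W2_le A0_ge0 A1_eq A0_eq.
have y2_ge : 4 <= y ^+ 2 by nra.
have u_ge32 : 32 <= u by have := expr5_ge32 y_ge2; lra.
have P_gt0 : 0 < P by case: PQ => [[-> _]|[-> _]]; lra.
have Q_ge : y * v - 1 <= Q by case: PQ => [[_ [-> _]]|[_ ->]]; lra.
have Q_gt0 : 0 < Q by nra.
have A1_gt0 : 0 < A1.
  have : 0 < n * (v * u * W1) by rewrite !mulr_gt0 //; lra.
  by rewrite -A1_eq pmulr_lgt0.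
have A0_A1 : A0 * (y * Q * u) = (v * W2) * A1.
  apply: (mulIf (lt0r_neq0 P_gt0)).
  have -> : A0 * (y * Q * u) * P = (A0 * y * P * Q) * u by ring.
  have -> : v * W2 * A1 * P = v * W2 * (A1 * P) by ring.
  by rewrite A0_eq A1_eq; ring.
have vW2_lt : v * W2 < y * Q * u.
  have : v * (y * u + 1) < y * u * (y * v - 1).
    have : 0 <= y * u * (v * (y - 1) - 2) by apply: mulr_ge0; nra.
    nra.
  have : v * W2 <= v * (y * u + 1) by rewrite ler_pM2l //; lra.
  have : y * u * (y * v - 1) <= y * Q * u by nra.
  lra.
split.
  have : A0 * (y * Q * u) < A1 * (y * Q * u).
    by rewrite A0_A1 mulrC ltr_pM2l.
  by rewrite ltr_pM2r //; nra.
have yPQ_gt0 : 0 < y * P * Q by apply: mulr_gt0 => //; apply: mulr_gt0 => //; lra.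
rewrite -(ltr_pM2r yPQ_gt0).
have -> : (2 * A0 + y * A1) * (y * P * Q) = 2 * (A0 * y * P * Q) + y ^+ 2 * Q * (A1 * P).
  by ring.
rewrite A0_eq A1_eq.
have W_prod : W1 * W2 <= (u + 1) * (y * u + 1) by apply: ler_pM; lra.
have W_bound : 2 * (v ^+ 2 * W1 * W2) + y ^+ 2 * Q * (v * u * W1)
    <= 2 * v ^+ 2 * (y * u + 1) * (u + 1) + y ^+ 2 * v * u * (u + 1) * Q.
  have : 0 <= y ^+ 2 * Q * (v * u) by apply: mulr_ge0; nra.
  nra.
suff : 2 * v ^+ 2 * (y * u + 1) * (u + 1) + y ^+ 2 * v * u * (u + 1) * Q
    < y ^+ 3 * u ^+ 2 * P * Q by nra.
case: PQ => [[-> [-> v_ge2]]|[-> ->]].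
  by have := even_case_ineq y_ge2 v_ge2 u_ge; nra.
by have := odd_case_ineq y_ge2 v_ge u_ge; nra.
Qed.

Lemma gbin0 (b : rat) (m : nat) : gbin b m 0 = 1.
Proof. by rewrite /gbin big_ord0. Qed.

Lemma gbinS (b : rat) (m k : nat) :
  gbin b m k.+1 = gbin b m k * ((b ^+ (m - k) - 1) / (b ^+ k.+1 - 1)).
Proof. by rewrite /gbin big_ord_recr. Qed.

(* Upper-index recursion of Gaussian binomials:
   [n+1, k]_b (b^(n+1-k) - 1) = [n, k]_b (b^(n+1) - 1).  It relates the
   coefficients [d-h, d-j]_b of the three summands T_0, T_1, T_2. *)
Lemma gbin_shift (b : rat) (n k : nat) : (k <= n)%N ->
  gbin b n.+1 k * (b ^+ (n.+1 - k) - 1) = gbin b n k * (b ^+ n.+1 - 1).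
Proof.
elim: k => [|k IHk] k_le; first by rewrite !gbin0 subn0.
rewrite !gbinS subSS.
transitivity (gbin b n.+1 k * (b ^+ (n.+1 - k) - 1) * ((b ^+ (n - k) - 1) / (b ^+ k.+1 - 1))).
  by ring.
by rewrite IHk 1?ltnW //; ring.
Qed.

Lemma gbin_neq0 (b : rat) (m k : nat) :
  (forall n, (0 < n)%N -> b ^+ n != 1) -> (k <= m)%N -> gbin b m k != 0.
Proof.
move=> b_pow k_le; rewrite /gbin; apply/prodf_neq0 => t _.
by rewrite mulf_eq0 invr_eq0 !subr_eq0 negb_or !b_pow //; have := ltn_ord t; lia.
Qed.

Lemma gbin_small (b : rat) : b != 1 -> b ^+ 2 != 1 ->
  [/\ gbin b 1 1 = 1, gbin b 2 1 = b + 1 & gbin b 2 2 = 1].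
Proof.
move=> b_neq1 b2_neq1; rewrite !gbinS !gbin0 !subn0 subn1 /= !mul1r expr1.
have b1 : b - 1 != 0 by rewrite subr_eq0.
have b21 : b ^+ 2 - 1 != 0 by rewrite subr_eq0.
split; first exact: divff.
  by apply: (mulIf b1); rewrite mulfVK //; ring.
by rewrite mulrA divfK // divff.
Qed.

Lemma norm_oppX (R : realDomainType) (y : R) (n : nat) :
  0 <= y -> `|(- y) ^+ n| = y ^+ n.
Proof. by move=> y_ge0; rewrite normrX normrN ger0_norm. Qed.

Lemma oppX_neq1 (R : realDomainType) (y : R) (n : nat) :
  1 < y -> (0 < n)%N -> (- y) ^+ n != 1.
Proof.
move=> y_gt1 n_gt0; apply/eqP => /(congr1 Num.norm).
rewrite norm_oppX ?normr1 => [yn_eq1|]; last lra.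
have : y ^+ 1 <= y ^+ n by rewrite ler_weXn2l //; lra.
by rewrite expr1 yn_eq1; lra.
Qed.

Lemma oppX_dist1 (R : realDomainType) (y : R) (n : nat) :
  2 <= y -> (0 < n)%N ->
  (`|(- y) ^+ n - 1| = y ^+ n - 1 /\ `|- y * (- y) ^+ n - 1| = y * y ^+ n + 1
     /\ y ^+ 2 <= y ^+ n)
  \/ (`|(- y) ^+ n - 1| = y ^+ n + 1 /\ `|- y * (- y) ^+ n - 1| = y * y ^+ n - 1).
Proof.
move=> y_ge2 n_gt0; have y_ge1 : 1 <= y by lra.
have v_ge : y <= y ^+ n by rewrite -{1}(expr1 y) ler_weXn2l.
rewrite exprNn -signr_odd; case: (boolP (odd n)) => [_|n_even]; [right | left].
  rewrite expr1 !mulN1r mulrNN -opprD normrN.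
  by split; rewrite ger0_norm //; nra.
have n_ge2 : (2 <= n)%N by move: n_gt0 n_even; case: (n) => [|[|]].
rewrite /= expr0 !mul1r mulNr -opprD normrN.
by split; [|split; [|exact: ler_weXn2l]]; rewrite ger0_norm //; nra.
Qed.

Lemma bin2S (k : nat) : 'C(k.+1, 2) = ('C(k, 2) + k)%N.
Proof. by rewrite binS bin1. Qed.

Lemma Qeig_next_to_top (q d j : nat) : (0 < j)%N -> (0 < d)%N ->
  Qeig q d (d - 1) j = Tsum q d (d - 1) j 0 + Tsum q d (d - 1) j 1.
Proof.
move=> j_gt0 d_gt0; rewrite /Qeig (_ : minn j (d - (d - 1)) = 1%N); last by lia.
by rewrite !big_ord_recr big_ord0 /= add0r.
Qed.

Lemma Qeig_second_to_top (q d j : nat) : (1 < j)%N -> (1 < d)%N ->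
  Qeig q d (d - 2) j
    = Tsum q d (d - 2) j 0 + Tsum q d (d - 2) j 1 + Tsum q d (d - 2) j 2.
Proof.
move=> j_gt1 d_gt1; rewrite /Qeig (_ : minn j (d - (d - 2)) = 2%N); last by lia.
by rewrite !big_ord_recr big_ord0 /= add0r.
Qed.

Lemma TsumE (q d i j h : nat) :
  Tsum q d i j h = (-1) ^+ j * (- q%:R) ^+ ('C(j - h, 2) + h * d)
                     * gbin (- q%:R) (d - h) (d - j) * gbin (- q%:R) (d - i) h.
Proof. by []. Qed.

Lemma Tsum0_indep (q d i i' j : nat) : Tsum q d i j 0 = Tsum q d i' j 0.
Proof. by rewrite /Tsum !gbin0. Qed.

(* Writing x = -q, z = x^(j-1), w = x^(d-1) and
   N = (-1)^j x^binom(j-2,2) [d-2, d-j]_x, they are determined by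
     T_1 (z - 1) = N z w (w - 1),
     T_0 x (z - 1)(xz - 1) = N z^2 (w - 1)(xw - 1),
     T_2 = N x^(2d),
   from which [ratio_estimate] yields the bounds needed by [dominant_terms]. *)
Section TopSummands.

Variables q d j : nat.
Hypotheses (q_ge2 : (2 <= q)%N) (d_ge6 : (6 <= d)%N).
Hypotheses (j_ge2 : (2 <= j)%N) (j_le_d : (j <= d)%N).

Let y : rat := q%:R.
Let x : rat := - y.
Let z : rat := x ^+ (j - 1).
Let w : rat := x ^+ (d - 1).
Let N : rat := (-1) ^+ j * x ^+ 'C(j - 2, 2) * gbin x (d - 2) (d - j).

Lemma base_ge2 : 2 <= y.
Proof. by rewrite /y (ler_nat _ 2 q). Qed.

Lemma base_pow_neq1 (n : nat) : (0 < n)%N -> x ^+ n != 1.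
Proof. by apply: oppX_neq1; have := base_ge2; lra. Qed.

Lemma gbin_small_base : [/\ gbin x 1 1 = 1, gbin x 2 1 = x + 1 & gbin x 2 2 = 1].
Proof. by apply: gbin_small; [rewrite -(expr1 x) |]; exact: base_pow_neq1. Qed.

Lemma normalizer_neq0 : N != 0.
Proof.
have x_neq0 : x != 0 by rewrite oppr_eq0; have := base_ge2; lra.
rewrite !mulf_neq0 ?signr_eq0 ?expf_neq0 // gbin_neq0 //; last by lia.
exact: base_pow_neq1.
Qed.

(* T_1(d-2) = (x + 1) T_1(d-1), since [2, 1]_x = x + 1 and [1, 1]_x = 1. *)
Lemma Tsum1_step : Tsum q d (d - 2) j 1 = (1 - y) * Tsum q d (d - 1) j 1.
Proof.
have [G11 G21 _] := gbin_small_base.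
rewrite !TsumE -/y -/x.
have -> : (d - (d - 2) = 2)%N by lia.
have -> : (d - (d - 1) = 1)%N by lia.
by rewrite G11 G21; ring.
Qed.

Lemma gbin_shift_d2 : gbin x (d - 1) (d - j) * (z - 1) = gbin x (d - 2) (d - j) * (w - 1).
Proof.
have := @gbin_shift x (d - 2) (d - j) ltac:(lia).
have -> : (d - 2).+1 = (d - 1)%N by lia.
by have -> : (d - 1 - (d - j) = j - 1)%N by lia.
Qed.

Lemma gbin_shift_d1 : gbin x d (d - j) * (x * z - 1) = gbin x (d - 1) (d - j) * (x * w - 1).
Proof.
have d_pred : (d - 1).+1 = d by lia.
rewrite /z /w -!exprS d_pred.
have := @gbin_shift x (d - 1) (d - j) ltac:(lia).
by rewrite d_pred; have -> : (d - (d - j) = (j - 1).+1)%N by lia.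
Qed.

Lemma Tsum1_identity : Tsum q d (d - 1) j 1 * (z - 1) = N * (z * w * (w - 1)).
Proof.
have [G11 _ _] := gbin_small_base.
rewrite TsumE -/y -/x.
have -> : (d - (d - 1) = 1)%N by lia.
have -> : ('C(j - 1, 2) + 1 * d = 'C(j - 2, 2) + ((j - 1) + (d - 1)))%N.
  have -> : (j - 1 = (j - 2).+1)%N by lia.
  by rewrite bin2S; lia.
rewrite G11 !exprD -/z -/w /N.
transitivity ((-1) ^+ j * x ^+ 'C(j - 2, 2) * z * w * (gbin x (d - 1) (d - j) * (z - 1))).
  by ring.
by rewrite gbin_shift_d2; ring.
Qed.

Lemma Tsum0_identity :
  Tsum q d (d - 1) j 0 * x * (z - 1) * (x * z - 1) = N * (z ^+ 2 * (w - 1) * (x * w - 1)).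
Proof.
have x_exp : x ^+ 'C(j, 2) * x = x ^+ 'C(j - 2, 2) * z ^+ 2.
  rewrite -exprSr /z -exprM -exprD; congr (_ ^+ _).
  have -> : 'C(j, 2) = 'C((j - 2).+2, 2) by congr 'C(_, _); lia.
  by rewrite !bin2S; lia.
rewrite TsumE -/y -/x !subn0 mul0n addn0 gbin0 mulr1.
transitivity ((-1) ^+ j * (x ^+ 'C(j, 2) * x) * (gbin x d (d - j) * (x * z - 1)) * (z - 1)).
  by ring.
rewrite x_exp gbin_shift_d1.
transitivity ((-1) ^+ j * x ^+ 'C(j - 2, 2) * z ^+ 2 * (x * w - 1)
                * (gbin x (d - 1) (d - j) * (z - 1))).
  by ring.
by rewrite gbin_shift_d2 /N; ring.
Qed.

Lemma Tsum2_identity : Tsum q d (d - 2) j 2 = N * x ^+ (2 * d).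
Proof.
have [_ _ G22] := gbin_small_base.
rewrite TsumE -/y -/x.
have -> : (d - (d - 2) = 2)%N by lia.
by rewrite G22 exprD /N; ring.
Qed.

Lemma top_summand_bounds :
  `|Tsum q d (d - 1) j 0| < `|Tsum q d (d - 1) j 1| /\
  2 * `|Tsum q d (d - 1) j 0| + y * `|Tsum q d (d - 1) j 1| < `|Tsum q d (d - 2) j 2|.
Proof.
have exp2d : (2 * d = 2 + (d - 1) * 2)%N by lia.
have y_ge2 := base_ge2; have y_ge1 : 1 <= y by lra.
have norm_x : `|x| = y by rewrite normrN ger0_norm //; lra.
pose u := y ^+ (d - 1); pose v := y ^+ (j - 1).
have norm_w : `|w| = u by rewrite norm_oppX //; lra.
have norm_z : `|z| = v by rewrite norm_oppX //; lra.
have u_ge : y ^+ 5 <= u by rewrite ler_weXn2l //; lia.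
have v_ge : y <= v by rewrite -{1}(expr1 y) ler_weXn2l //; lia.
have v_le : v <= u by rewrite ler_weXn2l //; lia.
have PQ := oppX_dist1 y_ge2 (ltac:(lia) : (0 < j - 1)%N); rewrite -/x -/z in PQ.
have W1_le : `|w - 1| <= u + 1 by rewrite -norm_w -(normr1 rat) ler_normB.
have W1_ge : u - 1 <= `|w - 1| by rewrite -norm_w -(normr1 rat) lerB_dist.
have W2_le : `|x * w - 1| <= y * u + 1.
  by rewrite -norm_x -norm_w -normrM -(normr1 rat) ler_normB.
have N_gt0 : 0 < `|N| by rewrite normr_gt0 normalizer_neq0.
have A1_eq : `|Tsum q d (d - 1) j 1| * `|z - 1| = `|N| * (v * u * `|w - 1|).
  by rewrite -normrM Tsum1_identity !normrM norm_z norm_w.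
have A0_eq : `|Tsum q d (d - 1) j 0| * y * `|z - 1| * `|x * z - 1|
    = `|N| * (v ^+ 2 * `|w - 1| * `|x * w - 1|).
  by rewrite -norm_x -!normrM Tsum0_identity !normrM normrX norm_z.
have [lt01 lt2] := ratio_estimate y_ge2 u_ge v_ge v_le N_gt0 PQ W1_ge W1_le
  (normr_ge0 _) W2_le (normr_ge0 _) A1_eq A0_eq.
split=> //; rewrite Tsum2_identity (normrM N) normrX norm_x.
suff -> : y ^+ (2 * d) = y ^+ 2 * u ^+ 2 by [].
by rewrite exp2d exprD exprM.
Qed.

End TopSummands.

Lemma prime_power_ge2 (q : nat) : prime_power q -> (2 <= q)%N.
Proof.
move=> [p [k [p_prime [k_gt0 ->]]]].
by have := ltn_exp2l 0 k (prime_gt1 p_prime); rewrite expn0 k_gt0.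
Qed.

Theorem lemma5p7 (q d j : nat) :
  prime_power q -> (6 <= d)%N -> (2 <= j)%N -> (j <= d)%N ->
  `|Qeig q d (d - 1) j| < `|Qeig q d (d - 2) j| /\
  (forall i : nat, (i = d - 2)%N \/ (i = d - 1)%N ->
     Num.sg (Qeig q d i j) = Num.sg (Tsum q d i j (minn j (d - i)))).
Proof.
move=> /prime_power_ge2 q_ge2 d_ge6 j_ge2 j_le_d.
have last_d1 : minn j (d - (d - 1)) = 1%N by lia.
have last_d2 : minn j (d - (d - 2)) = 2%N by lia.
have Q_d1 := Qeig_next_to_top q (ltnW j_ge2) (ltac:(lia) : (0 < d)%N).
have Q_d2 : Qeig q d (d - 2) j = Tsum q d (d - 1) j 0
    + (1 - q%:R) * Tsum q d (d - 1) j 1 + Tsum q d (d - 2) j 2.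
  rewrite (Qeig_second_to_top q j_ge2 (ltac:(lia) : (1 < d)%N)).
  by rewrite (Tsum0_indep _ _ (d - 2) (d - 1)) Tsum1_step.
have [lt01 lt2] := top_summand_bounds q_ge2 d_ge6 j_ge2 j_le_d.
have [Q_lt sg_d1 sg_d2] := dominant_terms (base_ge2 q_ge2) lt01 lt2.
split; first by rewrite Q_d1 Q_d2.
move=> i [-> | ->].
- by rewrite last_d2 Q_d2 sg_d2.
- by rewrite last_d1 Q_d1 sg_d1.
Qed.
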